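(* Let $f$ be an $(n-1)$-variable Boolean function and let $\bar f$ be the $n$-variable Boolean function $\bar f(x_1,\dots,x_n)=x_n+f(x_1,\dots,x_{n-1})$. Then $$\mathcal{FAI}(f)\le\mathcal{FAI}(\bar f)\le\mathcal{FAI}(f)+2.$$
   Context: An $m$-variable Boolean function is a map $\mathbb{F}_2^m\to\mathbb{F}_2$, with algebraic degree $\deg$ the degree of its algebraic normal form. For $h$ an $m$-variable function, ${AN}^c(h)$ is the set of $g$ with $h\cdot g\neq0$, ${FAI}(h)$ is the minimum of $\deg(g)+\deg(h\cdot g)$ over $g\in{AN}^c(h)$, $g\neq 1$, and $\mathcal{FAI}(h)=\min({FAI}(h),{FAI}(1+h))$. *)

From mathcomp Require Import all_boot.
Set Implicit Arguments. Unset Strict Implicit. Unset Printing Implicit Defensive.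

(* Points of F_2^m: boolean vectors indexed by 'I_m (coordinate i = x_{i+1}). *)
Definition vec (m : nat) := {ffun 'I_m -> bool}.
Definition bfun (m : nat) := {ffun vec m -> bool}.

Section BF.
Variable m : nat.

Definition bf_zero : bfun m := [ffun _ => false].
Definition bf_one  : bfun m := [ffun _ => true].
Definition bf_add (f g : bfun m) : bfun m := [ffun x => xorb (f x) (g x)].
Definition bf_mul (f g : bfun m) : bfun m := [ffun x => f x && g x].

Definition vle (x u : vec m) : bool := [forall i, x i ==> u i].
Definition wt (u : vec m) : nat := #|[set i | u i]|.

(* ANF coefficient of the monomial prod_{i : u i} x_i (binary Moebius transform) *)
Definition anf (f : bfun m) (u : vec m) : bool :=
  \big[xorb/false]_(x | vle x u) f x.

(* algebraic degree = max weight of a monomial in the ANF (0 for the zero function) *)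
Definition deg (f : bfun m) : nat := \max_(u | anf f u) wt u.

(* Minima over possibly empty families, in nat extended by +oo (= None). *)
Definition omin : option nat -> option nat -> option nat := oAC minnA minnC.

Definition FAI (h : bfun m) : option nat :=
  \big[omin/None]_(g | (bf_mul h g != bf_zero) && (g != bf_one))
     Some (deg g + deg (bf_mul h g)).

Definition FAIcal (h : bfun m) : option nat := omin (FAI h) (FAI (bf_add bf_one h)).
End BF.

Definition ole (a b : option nat) : bool :=
  match a, b with
  | _, None => true
  | None, Some _ => false
  | Some x, Some y => x <= y
  end.

Definition oadd (k : nat) (a : option nat) : option nat := omap (addn k) a.

Definition extend (m : nat) (f : bfun m) : bfun m.+1 :=
  [ffun x : vec m.+1 =>
     xorb (x ord_max) (f [ffun i : 'I_m => x (widen_ord (leqnSn m) i)])].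

From mathcomp Require Import all_boot zify.
Set Implicit Arguments. Unset Strict Implicit. Unset Printing Implicit Defensive.

(* Split off the last variable: F on n+1 variables is determined by its
   restrictions F_0, F_1 to x_{n+1} = 0, 1, and its ANF is
   F_0 + x_{n+1} (F_0 + F_1); hence deg F_b <= deg F, and deg (F_0 + F_1) < deg F
   when F_0 <> F_1.  The restrictions of bar f are f and 1 + f.
   Upper bound: a pair (g, f g) for f lifts to the pair (G, bar f G) with
   G = (1 + x_{n+1}) g, which costs at most one degree in each factor.
   Lower bound: for a pair (G, F G) for F, either some restriction
   (G_b, F_b G_b) is again a pair for F_b, or G_b = 1 and (F G)_{~b} = 0; then
   deg (F G) >= deg F_b + 1 and deg G >= 1, which pays for the bound
   FAI(F_b) <= deg F_b + 2 obtained by multiplying F_b by a literal. *)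

Section BooleanFunctions.
Variable m : nat.
Implicit Types (f g h : bfun m) (u x : vec m).

Lemma anfE h u : anf h u = \big[addb/false]_(x | vle x u) h x.
Proof. by apply: (eq_big_op (fun=> True)) => // -[] []. Qed.

Lemma anf_add f g u : anf (bf_add f g) u = anf f u (+) anf g u.
Proof.
by rewrite !anfE -big_split; apply: eq_bigr => x _; rewrite ffunE; case: (f x) (g x) => -[].
Qed.

Lemma anf0 u : anf (bf_zero m) u = false.
Proof. by rewrite anfE big1 // => x _; rewrite ffunE. Qed.

Lemma wt_le_deg h u : anf h u -> wt u <= deg h.
Proof. by move=> hu; rewrite /deg (bigD1 u) //= leq_maxl. Qed.

Lemma deg_le h d : (forall u, anf h u -> wt u <= d) -> deg h <= d.
Proof. by move=> hd; apply/bigmax_leqP => u /hd. Qed.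

Lemma bf_zero_neq_one : bf_zero m != bf_one m.
Proof. by apply/eqP => /ffunP /(_ [ffun=> false]); rewrite !ffunE. Qed.

Lemma bf_add0r : left_id (bf_zero m) (@bf_add m).
Proof. by move=> f; apply/ffunP => x; rewrite !ffunE. Qed.

Lemma bf_addr0 : right_id (bf_zero m) (@bf_add m).
Proof. by move=> f; apply/ffunP => x; rewrite !ffunE; case: (f x). Qed.

Lemma bf_add_eq0 f g : (bf_add f g == bf_zero m) = (f == g).
Proof.
apply/eqP/eqP => [/ffunP fg | ->]; apply/ffunP => x; last by rewrite !ffunE; case: (g x).
by have := fg x; rewrite !ffunE; case: (f x) (g x) => -[].
Qed.

Lemma deg0 : deg (bf_zero m) = 0.
Proof. by apply/eqP; rewrite -leqn0; apply: deg_le => u; rewrite anf0. Qed.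

Lemma bf_mulr0 : right_zero (bf_zero m) (@bf_mul m).
Proof. by move=> f; apply/ffunP => x; rewrite !ffunE andbF. Qed.

Lemma bf_add1K : involutive (bf_add (bf_one m)).
Proof. by move=> f; apply/ffunP => x; rewrite !ffunE; case: (f x). Qed.

Lemma bf_mulr1 : right_id (bf_one m) (@bf_mul m).
Proof. by move=> f; apply/ffunP => x; rewrite !ffunE andbT. Qed.

End BooleanFunctions.

Section Shannon.
Variable n : nat.
Implicit Types (F G : bfun n.+1) (g : bfun n) (x : vec n.+1) (y u : vec n) (b c : bool).

Definition low x : vec n := [ffun i => x (widen_ord (leqnSn n) i)].

Definition join y b : vec n.+1 :=
  [ffun i => if unlift ord_max i is Some j then y j else b].

Definition restr F b : bfun n := [ffun y => F (join y b)].

(* F = restr F false + x_{n+1} dlast F, see anf_join *)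
Definition dlast F : bfun n := bf_add (restr F false) (restr F true).

Definition on_last b g : bfun n.+1 :=
  [ffun x : vec n.+1 => (x ord_max == b) && g (low x)].

Lemma join_last y b : join y b ord_max = b.
Proof. by rewrite ffunE unlift_none. Qed.

Lemma join_lift y b i : join y b (lift ord_max i) = y i.
Proof. by rewrite ffunE liftK. Qed.

Lemma widen_lift (i : 'I_n) : widen_ord (leqnSn n) i = lift ord_max i.
Proof. by apply: val_inj; rewrite /= /bump leqNgt ltn_ord. Qed.

Lemma low_lift x i : low x i = x (lift ord_max i).
Proof. by rewrite ffunE widen_lift. Qed.

Lemma low_join y b : low (join y b) = y.
Proof. by apply/ffunP => i; rewrite low_lift join_lift. Qed.

Lemma join_low x : join (low x) (x ord_max) = x.
Proof.
apply/ffunP => i; case: (unliftP ord_max i) => [j ->|->]; last exact: join_last.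
by rewrite join_lift low_lift.
Qed.

Lemma vle_join y c u b : vle (join y c) (join u b) = vle y u && (c ==> b).
Proof.
apply/forallP/andP => [le_yu | [/forallP le_yu le_cb] i].
  split; last by have := le_yu ord_max; rewrite !join_last.
  by apply/forallP => i; have := le_yu (lift ord_max i); rewrite !join_lift.
case: (unliftP ord_max i) => [j ->|->]; last by rewrite !join_last.
by rewrite !join_lift.
Qed.

Lemma wt_join y b : wt (join y b) = wt y + b.
Proof.
rewrite /wt -!sum1_card [LHS]big_mkcond [in RHS]big_mkcond big_ord_recr /=.
rewrite !inE join_last; congr addn.
by apply: eq_bigr => i _; rewrite !inE widen_lift join_lift.
Qed.

Lemma big_join R (idx : R) (op : Monoid.com_law idx) (P : pred (vec n.+1)) H :
  \big[op/idx]_(x | P x) H x =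
  op (\big[op/idx]_(y | P (join y false)) H (join y false))
     (\big[op/idx]_(y | P (join y true)) H (join y true)).
Proof.
rewrite (reindex (fun p : bool * vec n => join p.2 p.1)) /=; last first.
  exists (fun x => (x ord_max, low x)) => [[b y]|x] _; last exact: join_low.
  by rewrite join_last low_join.
rewrite -(pair_big_dep xpredT (fun b y => P (join y b)) (fun b y => H (join y b))) /=.
by rewrite big_bool Monoid.mulmC.
Qed.

Lemma anf_restr F b u :
  anf (restr F b) u = \big[addb/false]_(y | vle y u) F (join y b).
Proof. by rewrite anfE; apply: eq_bigr => y _; rewrite ffunE. Qed.

Lemma anf_join F u b :
  anf F (join u b) = if b then anf (dlast F) u else anf (restr F false) u.
Proof.
rewrite anf_add !anf_restr anfE big_join /=.
under eq_bigl => y do rewrite vle_join implyFb andbT.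
under [X in addb _ X]eq_bigl => y do rewrite vle_join.
case: b; first by congr addb; apply: eq_bigl => y; rewrite /= andbT.
by rewrite [X in _ (+) X]big_pred0 ?addbF // => y; rewrite andbF.
Qed.

Lemma restr_inj F G b : restr F b = restr G b -> restr F (~~ b) = restr G (~~ b) -> F = G.
Proof.
move=> /ffunP eq_b /ffunP eq_nb; apply/ffunP => x; rewrite -(join_low x).
have := eq_b (low x); have := eq_nb (low x); rewrite !ffunE.
by case: b {eq_b eq_nb} (x ord_max) => -[].
Qed.

Lemma restr_neq F G : F != G -> exists b, restr F b != restr G b.
Proof.
move=> F_neq_G; apply/existsP; apply: contraR F_neq_G => /existsPn eq_FG.
by apply/eqP; apply: (restr_inj (b := false)); apply/eqP/negbNE/eq_FG.
Qed.

Lemma restr_neq_negb F G b :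
  restr F b = restr G b -> F != G -> restr F (~~ b) != restr G (~~ b).
Proof. by move=> eq_b; apply: contra => /eqP eq_nb; apply/eqP; apply: (restr_inj (b := b)). Qed.

Lemma restr_zero b : restr (bf_zero n.+1) b = bf_zero n.
Proof. by apply/ffunP => y; rewrite !ffunE. Qed.

Lemma restr_one b : restr (bf_one n.+1) b = bf_one n.
Proof. by apply/ffunP => y; rewrite !ffunE. Qed.

Lemma restr_add F G b : restr (bf_add F G) b = bf_add (restr F b) (restr G b).
Proof. by apply/ffunP => y; rewrite !ffunE. Qed.

Lemma restr_mul F G b : restr (bf_mul F G) b = bf_mul (restr F b) (restr G b).
Proof. by apply/ffunP => y; rewrite !ffunE. Qed.

Lemma restr_on_last b g c : restr (on_last b g) c = if c == b then g else bf_zero n.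
Proof.
apply/ffunP => y; rewrite ffunE [on_last _ _ _]ffunE join_last low_join.
by case: eqP => _; rewrite ?ffunE.
Qed.

Lemma dlastE F b : dlast F = bf_add (restr F b) (restr F (~~ b)).
Proof. by case: b => //; apply/ffunP => y; rewrite !ffunE; case: (F _) (F _) => -[]. Qed.

Lemma wt_le_deg_restr0 F u : anf (restr F false) u -> wt u <= deg F.
Proof.
move=> F0u; have := wt_le_deg (h := F) (u := join u false).
by rewrite anf_join wt_join addn0; apply.
Qed.

Lemma wt_lt_deg_dlast F u : anf (dlast F) u -> wt u < deg F.
Proof.
move=> DFu; have := wt_le_deg (h := F) (u := join u true).
by rewrite anf_join wt_join addn1; apply.
Qed.

Lemma deg_restr F b : deg (restr F b) <= deg F.
Proof.
apply: deg_le => u; case: b; last exact: wt_le_deg_restr0.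
have -> : anf (restr F true) u = anf (restr F false) u (+) anf (dlast F) u.
  by rewrite anf_add addKb.
by case F0u: (anf (restr F false) u) => /= DFu;
  [exact: wt_le_deg_restr0 | exact/ltnW/wt_lt_deg_dlast].
Qed.

Lemma deg_le_shannon F d :
  deg (restr F false) <= d -> (forall u, anf (dlast F) u -> wt u < d) -> deg F <= d.
Proof.
move=> deg_F0 deg_dF; apply: deg_le => x; rewrite -(join_low x) anf_join wt_join.
by case: (x ord_max) => [/deg_dF | /wt_le_deg]; lia.
Qed.

Lemma deg_on_last b g : deg (on_last b g) <= (deg g).+1.
Proof.
apply: deg_le_shannon => [|u]; rewrite ?(dlastE _ b) !restr_on_last.
  by case: b; rewrite /= ?deg0.
by case: b; rewrite /= ?bf_addr0 ?bf_add0r => /wt_le_deg.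
Qed.

Lemma mul_on_last F b g : bf_mul F (on_last b g) = on_last b (bf_mul (restr F b) g).
Proof.
apply: (restr_inj (b := false));
  by rewrite restr_mul !restr_on_last; case: b; rewrite /= ?bf_mulr0.
Qed.

Lemma on_last_eq0 b g : (on_last b g == bf_zero n.+1) = (g == bf_zero n).
Proof.
apply/eqP/eqP => [/(congr1 (restr^~ b)) | ->].
  by rewrite restr_on_last eqxx restr_zero.
by apply: (restr_inj (b := false)); rewrite !restr_on_last restr_zero; case: ifP.
Qed.

Lemma on_last_neq1 b g : on_last b g != bf_one n.+1.
Proof.
apply: contra (bf_zero_neq_one n) => /eqP /(congr1 (restr^~ (~~ b))).
by rewrite restr_on_last restr_one; case: b => /= ->.
Qed.

End Shannon.

Lemma anf_eq0 n (h : bfun n) : (forall u, anf h u = false) -> h = bf_zero n.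
Proof.
elim: n h => [|n IHn] h anf_h.
  apply/ffunP => x; rewrite ffunE -(anf_h x) anfE (big_pred1 x) // => y.
  have -> : y = x by apply/ffunP => -[].
  by rewrite /= eqxx; apply/forallP => -[].
have h0 : restr h false = bf_zero n.
  by apply: IHn => u; have := anf_h (join u false); rewrite anf_join.
have h1 : restr h true = bf_zero n.
  apply: IHn => u; have := anf_h (join u true).
  by rewrite anf_join /dlast h0 bf_add0r.
by apply: (restr_inj (b := false)); rewrite restr_zero.
Qed.

Lemma anf_neq0 n (h : bfun n) : h != bf_zero n -> exists u, anf h u.
Proof.
move=> h_neq0; apply/existsP; apply: contraR h_neq0 => /existsPn anf_h.
by apply/eqP/anf_eq0 => u; apply/negbTE/anf_h.
Qed.

Lemma deg_one n : deg (bf_one n) = 0.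
Proof.
apply/eqP; rewrite -leqn0; elim: n => [|n IHn].
  by apply: deg_le => u _; rewrite /wt eq_card0 // => -[].
apply: deg_le_shannon => [|u]; first by rewrite restr_one.
have -> : dlast (bf_one n.+1) = bf_zero n by apply/eqP; rewrite bf_add_eq0 !restr_one.
by rewrite anf0.
Qed.

Lemma deg_dlast n (F : bfun n.+1) : dlast F != bf_zero n -> deg (dlast F) < deg F.
Proof.
move=> /anf_neq0 [u /wt_lt_deg_dlast deg_F_gt0].
have : deg (dlast F) <= (deg F).-1 by apply: deg_le => w /wt_lt_deg_dlast; lia.
lia.
Qed.

Section ExtendedOrder.
Implicit Types (a b c d : option nat) (x y k : nat).

Lemma ominC : commutative omin.
Proof. exact: Monoid.mulmC. Qed.

Lemma ole_leq_trans a x y : ole a (Some x) -> x <= y -> ole a (Some y).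
Proof. by case: a => //= a; apply: leq_trans. Qed.

Lemma ole_ominl a b c : ole a c -> ole (omin a b) c.
Proof. by case: a b c => [a|] [b|] [c|] //=; rewrite /omin /oAC /= geq_min => ->. Qed.

Lemma ole_ominr a b c : ole b c -> ole (omin a b) c.
Proof. by rewrite ominC; apply: ole_ominl. Qed.

Lemma ole_omin a b c : ole a b -> ole a c -> ole a (omin b c).
Proof. by case: a b c => [a|] [b|] [c|] //=; rewrite /omin /oAC /= leq_min => -> ->. Qed.

Lemma ole_omin2 a b c d : ole a c -> ole b d -> ole (omin a b) (omin c d).
Proof. by move=> ac bd; apply: ole_omin; [apply: ole_ominl | apply: ole_ominr]. Qed.

Lemma oadd_omin k a b : oadd k (omin a b) = omin (oadd k a) (oadd k b).
Proof. by case: a b => [a|] [b|] //=; rewrite /omin /oAC /= addn_minr. Qed.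

End ExtendedOrder.

Section FastAlgebraicImmunity.
Variable m : nat.
Implicit Types (h g : bfun m) (c : nat).

Lemma FAI_le h g : bf_mul h g != bf_zero m -> g != bf_one m ->
  ole (FAI h) (Some (deg g + deg (bf_mul h g))).
Proof.
move=> hg_neq0 g_neq1; rewrite /FAI (bigD1 g) /=; last by rewrite hg_neq0 g_neq1.
by apply: ole_ominl; rewrite /= leqnn.
Qed.

Lemma FAI_witness h c : FAI h = Some c ->
  exists2 g, (bf_mul h g != bf_zero m) && (g != bf_one m) & c = deg g + deg (bf_mul h g).
Proof.
move: c; rewrite /FAI; elim/big_rec: _ => [//|g a adm_g IHa] c.
case: a IHa => [a|] IHa; rewrite /omin /oAC /=; last by case=> <-; exists g.
by case=> <-; rewrite /minn; case: ifP => _; [exists g | apply: IHa].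
Qed.

End FastAlgebraicImmunity.

Lemma FAI_le_deg n (h : bfun n.+1) : h != bf_zero n.+1 -> ole (FAI h) (Some (deg h + 2)).
Proof.
move=> /restr_neq [b]; rewrite restr_zero => hb_neq0.
have hg : bf_mul h (on_last b (bf_one n)) = on_last b (restr h b).
  by rewrite mul_on_last bf_mulr1.
apply: ole_leq_trans (FAI_le _ (on_last_neq1 b (bf_one n))) _.
  by rewrite hg on_last_eq0.
have := deg_on_last b (bf_one n); have := deg_on_last b (restr h b).
by rewrite hg deg_one; have := deg_restr h b; lia.
Qed.

Lemma FAI_le_restr n (F : bfun n.+1) b : ole (FAI F) (oadd 2 (FAI (restr F b))).
Proof.
case FAI_Fb: (FAI (restr F b)) => [c|] //=; last by case: (FAI F).
have [g /andP [Fg_neq0 g_neq1] ->] := FAI_witness FAI_Fb.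
have FG := mul_on_last F b g.
apply: ole_leq_trans (FAI_le _ (on_last_neq1 b g)) _; first by rewrite FG on_last_eq0.
by rewrite FG; have := deg_on_last b g; have := deg_on_last b (bf_mul (restr F b) g); lia.
Qed.

Lemma FAI_restr_le_mul n (F G : bfun n.+1) b :
    restr (bf_mul F G) b != bf_zero n -> restr G b != bf_one n ->
  ole (FAI (restr F b)) (Some (deg G + deg (bf_mul F G))).
Proof.
rewrite restr_mul => FGb_neq0 Gb_neq1.
apply: ole_leq_trans (FAI_le FGb_neq0 Gb_neq1) _.
by rewrite -restr_mul leq_add ?deg_restr.
Qed.

Lemma FAI_restr_le_degenerate n (F G : bfun n.+2) b :
    restr (bf_mul F G) b != bf_zero n.+1 -> restr (bf_mul F G) (~~ b) = bf_zero n.+1 ->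
    restr G b = bf_one n.+1 -> G != bf_one n.+2 ->
  ole (FAI (restr F b)) (Some (deg G + deg (bf_mul F G))).
Proof.
move=> FGb_neq0 FGnb_eq0 Gb_eq1 G_neq1.
have FGb : restr (bf_mul F G) b = restr F b by rewrite restr_mul Gb_eq1 bf_mulr1.
have dlast_FG : dlast (bf_mul F G) = restr F b by rewrite (dlastE _ b) FGnb_eq0 bf_addr0.
have deg_FG : deg (restr F b) < deg (bf_mul F G).
  by rewrite -dlast_FG deg_dlast // dlast_FG -FGb.
have deg_G : 0 < deg G.
  apply: leq_ltn_trans (deg_dlast _); rewrite ?(dlastE _ b) ?bf_add_eq0 // Gb_eq1 eq_sym.
  by rewrite -(restr_one n.+1 (~~ b)) restr_neq_negb ?restr_one.
apply: ole_leq_trans (FAI_le_deg _) _; first by rewrite -FGb.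
lia.
Qed.

Lemma FAI_restr_le n (F : bfun n.+2) :
  ole (omin (FAI (restr F false)) (FAI (restr F true))) (FAI F).
Proof.
case FAI_F: (FAI F) => [c|]; last by case: (omin _ _).
have [G /andP [FG_neq0 G_neq1] ->] := FAI_witness FAI_F.
suff [b le_b] : exists b, ole (FAI (restr F b)) (Some (deg G + deg (bf_mul F G))).
  by case: b le_b => [/ole_ominr | /ole_ominl].
have [b] := restr_neq FG_neq0; rewrite restr_zero => FGb_neq0.
have [Gb_eq1 | Gb_neq1] := eqVneq (restr G b) (bf_one _); last first.
  by exists b; apply: FAI_restr_le_mul.
have [FGnb_eq0 | FGnb_neq0] := eqVneq (restr (bf_mul F G) (~~ b)) (bf_zero _).
  by exists b; apply: FAI_restr_le_degenerate.
exists (~~ b); apply: FAI_restr_le_mul => //.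
by rewrite -(restr_one n.+1 (~~ b)) restr_neq_negb ?restr_one.
Qed.

Lemma extendE n (f : bfun n) (x : vec n.+1) : extend f x = xorb (x ord_max) (f (low x)).
Proof. by rewrite ffunE. Qed.

Lemma restr_extend n (f : bfun n) b :
  restr (extend f) b = if b then bf_add (bf_one n) f else f.
Proof. by apply/ffunP => y; rewrite ffunE extendE join_last low_join; case: b; rewrite ?ffunE. Qed.

Theorem corollary3 (m : nat) (hm : 0 < m) (f : bfun m) :
  ole (FAIcal f) (FAIcal (extend f)) &&
  ole (FAIcal (extend f)) (oadd 2 (FAIcal f)).
Proof.
case: m hm f => [//|n] _ f; set F := extend f; set F' := bf_add (bf_one _) F.
have F0 : restr F false = f by rewrite restr_extend.
have F1 : restr F true = bf_add (bf_one _) f by rewrite restr_extend.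
have F'0 : restr F' false = bf_add (bf_one _) f by rewrite restr_add restr_one F0.
have F'1 : restr F' true = f by rewrite restr_add restr_one F1 bf_add1K.
rewrite /FAIcal; apply/andP; split.
  apply: ole_omin; first by have := FAI_restr_le F; rewrite F0 F1.
  by rewrite ominC; have := FAI_restr_le F'; rewrite F'0 F'1.
rewrite oadd_omin; apply: ole_omin2.
  by have := FAI_le_restr F false; rewrite F0.
by have := FAI_le_restr F' false; rewrite F'0.
Qed.
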